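(* Let $m \ge 2$ and let $S_1,\dots,S_m$ be mutually independent nonnegative random variables (the ranking scores), each having a probability density function on $[0,\infty)$ and a finite first moment. For each $j$, let $r_j \in \{1,\dots,m\}$ be the rank of $S_j$ among $S_1,\dots,S_m$ in decreasing order, i.e. $r_j = 1 + \#\{\ell \ne j : S_\ell > S_j\}$ (ties occur with probability zero). Then for any $i \in \{1,\dots,m-1\}$ and any $k \in \{1,\dots,m-1\}$ with $\mathrm{P}(r_i = k) > 0$ and $\mathrm{P}(r_i = k+1) > 0$, $$\mathbb{E}[S_i \mid r_i = k] \ \ge\ \mathbb{E}[S_i \mid r_i = k+1].$$ *)

From HB Require Import structures.
From mathcomp Require Import all_boot all_order all_algebra.
From mathcomp Require Import all_classical all_reals all_analysis.
Set Implicit Arguments. Unset Strict Implicit. Unset Printing Implicit Defensive.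
Import Order.TTheory GRing.Theory Num.Theory.
Local Open Scope classical_set_scope.
Local Open Scope ring_scope.

(* Mutual independence of a finite family of real random variables:
   product rule for every family of Borel sets (taking B j = setT recovers
   every subfamily). *)
Definition mutually_independent d (T : measurableType d) (R : realType)
  (P : probability T R) (m : nat) (S : 'I_m -> T -> R) : Prop :=
  forall B : 'I_m -> set R, (forall j, measurable (B j)) ->
    P (\bigcap_(j in [set: 'I_m]) (S j @^-1` B j)) =
    (\prod_(j < m) P (S j @^-1` B j))%E.

Definition has_density_on_nonneg d (T : measurableType d) (R : realType)
  (P : probability T R) (X : T -> R) : Prop :=
  exists f : R -> R, measurable_fun setT f /\ (forall x, 0 <= f x) /\
    forall A : set R, measurable A ->
      P (X @^-1` A) = (\int[lebesgue_measure]_(x in A `&` [set x : R | (0 <= x)%R]) (f x)%:E)%E.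

Definition rank (T : Type) (R : realType) (m : nat) (S : 'I_m -> T -> R)
  (j : 'I_m) (t : T) : nat :=
  1 + #|[set l : 'I_m | (l != j) && (S j t < S l t)]|.

Definition cond_exp_event d (T : measurableType d) (R : realType)
  (P : probability T R) (X : T -> R) (A : set T) : R :=
  fine (\int[P]_(t in A) (X t)%:E)%E / fine (P A).

From HB Require Import structures.
From mathcomp Require Import all_boot all_order all_algebra.
From mathcomp Require Import all_classical all_reals all_analysis.
From mathcomp Require Import measurable_realfun ring.
Import Order.TTheory GRing.Theory Num.Theory.
Local Open Scope classical_set_scope.
Local Open Scope ring_scope.

(* Conditionally on [S i = s], the rank of [S i] is one plus the number
   [N(s)] of other scores exceeding [s].  By independence [N(s)] is a sum of
   independent Bernoulli variables with parameters [P (S l > s)], which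
   decrease in [s]; Poisson-binomial laws are totally positive of order 2 in
   their parameters, so [g k s := P (N(s) = k)] satisfies
   [g (k+1) s * g k t <= g k s * g (k+1) t] for [t <= s].  Since
   [E[S i; rank = k+1] = E[S i g k (S i)]] and [P (rank = k+1) = E[g k (S i)]],
   the claim becomes a Chebyshev-type covariance inequality, proved by
   symmetrising over two independent copies of [S i].  Ties are harmless since
   ranks count strict exceedances. *)

Section PoissonBinomial.
Variable R : realFieldType.
Implicit Types (a b : nat -> R) (p q : R) (ps : seq R).

Definition lag a j : R := if j is j'.+1 then a j' else 0.

Lemma lag_ge0 a j : (forall x, 0 <= a x) -> 0 <= lag a j.
Proof. by case: j => //= j ->. Qed.

Fixpoint poisson_binomial ps j : R :=
  if ps is p :: ps' then
    (1 - p) * poisson_binomial ps' j + p * lag (poisson_binomial ps') j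
  else (j == 0%N)%:R.

Lemma poisson_binomial_ge0 ps j :
  all (fun p => 0 <= p <= 1) ps -> 0 <= poisson_binomial ps j.
Proof.
elim: ps j => [|p ps IH] j /=; first by case: (j == 0%N).
case/andP=> /andP[p0 p1] hps.
have pb_ge0 x : 0 <= poisson_binomial ps x by exact: IH.
by rewrite addr_ge0 ?mulr_ge0 ?subr_ge0 ?lag_ge0.
Qed.

(* For [a = b] this is log-concavity; for [i = j] it says that [b] is below
   [a] in the likelihood ratio order. *)
Definition lr_below b a := forall i j e, (i <= j)%N ->
  b (j + e)%N * a i <= b j * a (i + e)%N.

Section LrBelowStep.
Variables a b : nat -> R.
Hypotheses (a_ge0 : forall x, 0 <= a x) (b_ge0 : forall x, 0 <= b x).
Hypothesis ba : lr_below b a.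

Lemma lr_below_lag : lr_below (lag b) (lag a).
Proof.
move=> [|i] [|j] e hij //=; last exact: ba.
all: by rewrite mulr0 mulr_ge0 // lag_ge0.
Qed.

Lemma lr_below_lagl : lr_below b (lag a).
Proof.
move=> [|i] j e hij /=; first by rewrite mulr0 mulr_ge0 // lag_ge0.
by rewrite ba // ltnW.
Qed.

Lemma lr_below_lagr i j e : (i < j)%N ->
  lag b (j + e)%N * a i <= lag b j * a (i + e)%N.
Proof. by case: j => // j; rewrite ltnS addSn => /ba; apply. Qed.

(* At [i = j] neither [lag b] against [a] nor [b] against [lag a] is
   comparable on its own, but their sum is. *)
Lemma lr_below_lag_diag i e :
  b (i + e)%N * lag a i + lag b (i + e)%N * a i <=
  b i * lag a (i + e)%N + lag b i * a (i + e)%N.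
Proof.
case: e => [|e]; first by rewrite addn0.
rewrite -subr_ge0.
have -> : b i * lag a (i + e.+1) + lag b i * a (i + e.+1) -
    (b (i + e.+1) * lag a i + lag b (i + e.+1) * a i) =
    (b i * a (i + e) - b (i + e) * a i) +
    (lag b i * a (i + e.+1) - b (i + e.+1) * lag a i).
  by rewrite addnS /=; ring.
rewrite addr_ge0 // subr_ge0 ?ba //.
case: i => [|i] /=; first by rewrite mulr0 mul0r.
by rewrite addSnnS ba.
Qed.

Lemma lr_below_cons p q : 0 <= q <= p -> p <= 1 ->
  lr_below (fun j => (1 - q) * b j + q * lag b j)
           (fun j => (1 - p) * a j + p * lag a j).
Proof.
move=> /andP[q0 qp] p1 i j e hij.
have p0 : 0 <= p by apply: le_trans qp.
have D1 := ba _ _ e hij; have D2 := lr_below_lag _ _ e hij.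
have D3 := lr_below_lagl _ _ e hij.
have D4 : 0 <= (b j * lag a (i + e)%N - b (j + e)%N * lag a i) +
               (lag b j * a (i + e)%N - lag b (j + e)%N * a i).
  case: (ltngtP i j) hij => // [ltij|<-] _.
    by rewrite addr_ge0 // subr_ge0 // lr_below_lagr.
  by rewrite addrACA -opprD subr_ge0 lr_below_lag_diag.
rewrite -subr_ge0.
have -> : ((1 - q) * b j + q * lag b j) * ((1 - p) * a (i + e)%N + p * lag a (i + e)%N) -
  ((1 - q) * b (j + e)%N + q * lag b (j + e)%N) * ((1 - p) * a i + p * lag a i) =
  (1 - q) * (1 - p) * (b j * a (i + e)%N - b (j + e)%N * a i) +
  q * p * (lag b j * lag a (i + e)%N - lag b (j + e)%N * lag a i) +
  (p - q) * (b j * lag a (i + e)%N - b (j + e)%N * lag a i) +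
  q * (1 - p) * ((b j * lag a (i + e)%N - b (j + e)%N * lag a i) +
                 (lag b j * a (i + e)%N - lag b (j + e)%N * a i)) by ring.
by rewrite !addr_ge0 ?mulr_ge0 ?subr_ge0 // (le_trans qp).
Qed.

End LrBelowStep.

Lemma poisson_binomial_lr_below (I : Type) (L : seq I) (p q : I -> R) :
  (forall l, 0 <= q l <= p l) -> (forall l, p l <= 1) ->
  lr_below (poisson_binomial (map q L)) (poisson_binomial (map p L)).
Proof.
move=> qp p1.
have pb_ge0 (r : I -> R) L' j : (forall l, 0 <= r l <= 1) ->
    0 <= poisson_binomial (map r L') j.
  move=> r01; apply: poisson_binomial_ge0; rewrite all_map.
  by apply: sub_all (all_predT L') => x _; exact: r01.
have p01 l : 0 <= p l <= 1.
  by case/andP: (qp l) => q0 qpl; rewrite (le_trans q0 qpl) p1.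
have q01 l : 0 <= q l <= 1.
  by case/andP: (qp l) => -> qpl; rewrite (le_trans qpl).
elim: L => [|l L IH] /=.
  by move=> [|i] [|j] [|e] //= _; rewrite ?mulr0 ?mul0r ?mulr1.
apply: lr_below_cons => // x; exact: pb_ge0.
Qed.

End PoissonBinomial.

Arguments lag {R}.
Arguments poisson_binomial {R}.
Arguments lr_below {R}.

Lemma succn_eq_set (U : Type) (f : U -> nat) j :
  [set x | (f x).+1 = j] =
  if j is j'.+1 then [set x | f x = j'] else set0.
Proof. by case: j => [|j]; apply/seteqP; split=> x //= [->]. Qed.

Lemma count_cons_eq_set (U : Type) (I : Type) (e : I -> U -> bool) l L j :
  [set x | count (e^~ x) (l :: L) = j] =
  ([set x | e l x] `&` [set x | (count (e^~ x) L).+1 = j]) `|`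
  (~` [set x | e l x] `&` [set x | count (e^~ x) L = j]).
Proof.
apply/seteqP; split=> x /=; first by case: (e l x) => /= h; [left|right].
by case: (e l x) => /= -[[]|[]].
Qed.

Lemma count_eq_measurable d (X : measurableType d) (I : eqType)
    (e : I -> X -> bool) (L : seq I) j :
  (forall l, l \in L -> measurable [set x | e l x]) ->
  measurable [set x | count (e^~ x) L = j].
Proof.
elim: L j => [|l L IH] j meas_e.
  case: j => [|j].
    by rewrite (_ : [set x | _] = setT) //; apply/seteqP.
  by rewrite (_ : [set x | _] = set0) //; apply/seteqP; split=> x.
have meas_el : measurable [set x | e l x] by apply: meas_e; rewrite mem_head.
have IH' j' : measurable [set x | count (e^~ x) L = j'].
  by apply: IH => l' l'L; apply: meas_e; rewrite in_cons l'L orbT.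
rewrite count_cons_eq_set succn_eq_set.
apply: measurableU; apply: measurableI => //; last exact: measurableC.
by case: j => [|j]; [exact: measurable0|exact: IH'].
Qed.

Section TwoIndependentCopies.
Context {d} {T : measurableType d} {R : realType} (P : probability T R).

Lemma integral_prod_mul (h h' : T -> R) :
  measurable_fun setT h -> measurable_fun setT h' ->
  (forall w, 0 <= h w) -> (forall w, 0 <= h' w) ->
  (\int[P \x P]_z ((h z.1 * h' z.2)%R)%:E =
   \int[P]_w (h w)%:E * \int[P]_w (h' w)%:E)%E.
Proof.
move=> mh mh' h0 h'0.
have mf : measurable_fun setT (fun z : (T * T)%type => ((h z.1 * h' z.2)%R)%:E).
  apply/measurable_EFinP; apply: measurable_funM.
    exact: measurableT_comp mh measurable_fst.
  exact: measurableT_comp mh' measurable_snd.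
rewrite (fubini_tonelli1 _ mf); last by move=> z; rewrite lee_fin mulr_ge0.
transitivity (\int[P]_x ((h x)%:E * \int[P]_w (h' w)%:E))%E.
  apply: eq_integral => x _; rewrite /fubini_F /=.
  under eq_integral do rewrite EFinM.
  by rewrite ge0_integralZl_EFin //; try (by move=> y _; rewrite lee_fin);
    try (exact/measurable_EFinP).
rewrite ge0_integralZr //; try (by move=> x _; rewrite lee_fin);
  try (exact/measurable_EFinP); by apply: integral_ge0 => y _; rewrite lee_fin.
Qed.

Lemma integral_prod_swap (f : (T * T)%type -> \bar R) : measurable_fun setT f ->
  (forall z, 0 <= f z)%E ->
  (\int[P \x P]_z f (z.2, z.1) = \int[P \x P]_z f z)%E.
Proof.
move=> mf f0.
have mfs : measurable_fun setT (fun z : (T * T)%type => f (z.2, z.1)).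
  apply: measurableT_comp mf _.
  exact: measurable_fun_pair measurable_snd measurable_fst.
by rewrite (fubini_tonelli1 _ mfs) // (fubini_tonelli2 f mf f0).
Qed.

(* Chebyshev's sum inequality for [X] against the decreasing ratio [v / u]:
   symmetrising over two independent copies [x, y] of [X] reduces it to
   [(x - y) (u x v y - v x u y) >= 0]. *)
Lemma chebyshev_ratio_decreasing (X : T -> R) (u v : R -> R) :
  measurable_fun setT X -> (forall w, 0 <= X w) ->
  measurable_fun setT u -> measurable_fun setT v ->
  (forall s, 0 <= u s) -> (forall s, 0 <= v s) ->
  (forall t s, t <= s -> v s * u t <= u s * v t) ->
  (\int[P]_w ((X w * v (X w))%R)%:E * \int[P]_w (u (X w))%:E <=
   \int[P]_w ((X w * u (X w))%R)%:E * \int[P]_w (v (X w))%:E)%E.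
Proof.
move=> mX X0 mu mv u0 v0 uv.
have muX : measurable_fun setT (u \o X) := measurableT_comp mu mX.
have mvX : measurable_fun setT (v \o X) := measurableT_comp mv mX.
have mXu : measurable_fun setT (fun w => X w * u (X w)) by exact: measurable_funM.
have mXv : measurable_fun setT (fun w => X w * v (X w)) by exact: measurable_funM.
pose f1 (z : (T * T)%type) := ((X z.1 * u (X z.1) * v (X z.2))%R)%:E.
pose f2 (z : (T * T)%type) := ((X z.1 * v (X z.1) * u (X z.2))%R)%:E.
have mf1 : measurable_fun setT f1.
  apply/measurable_EFinP; apply: measurable_funM.
    exact: measurableT_comp mXu measurable_fst.
  exact: measurableT_comp mvX measurable_snd.
have mf2 : measurable_fun setT f2.
  apply/measurable_EFinP; apply: measurable_funM.
    exact: measurableT_comp mXv measurable_fst.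
  exact: measurableT_comp muX measurable_snd.
have f10 z : (0 <= f1 z)%E by rewrite lee_fin !mulr_ge0.
have f20 z : (0 <= f2 z)%E by rewrite lee_fin !mulr_ge0.
rewrite -!integral_prod_mul //; try by move=> w; rewrite ?mulr_ge0.
rewrite -/f1 -/f2.
have symm : (\int[P \x P]_z (f2 z + f2 (z.2, z.1)) <=
             \int[P \x P]_z (f1 z + f1 (z.2, z.1)))%E.
  apply: ge0_le_integral => //; try (by move=> z _; rewrite adde_ge0);
    try (apply: emeasurable_funD => //; apply: measurableT_comp => //;
         exact: measurable_fun_pair measurable_snd measurable_fst).
  move=> [x y] _; rewrite /f1 /f2 /= -!EFinD lee_fin -subr_ge0.
  have -> : X x * u (X x) * v (X y) + X y * u (X y) * v (X x) -
      (X x * v (X x) * u (X y) + X y * v (X y) * u (X x)) =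
      (X x - X y) * (u (X x) * v (X y) - v (X x) * u (X y)) by ring.
  have [yx|xy] := leP (X y) (X x).
    by rewrite mulr_ge0 // subr_ge0 // uv.
  rewrite nmulr_rge0 ?subr_lt0 // subr_le0.
  by rewrite [u (X x) * _]mulrC [v (X x) * _]mulrC uv // ltW.
move: symm; rewrite !ge0_integralD //; try (by move=> z _);
  try (apply: measurableT_comp => //;
       exact: measurable_fun_pair measurable_snd measurable_fst).
rewrite !integral_prod_swap // => h; rewrite leNgt; apply/negP => lt21.
by move: h; rewrite leNgt => /negP; apply; apply: lteD.
Qed.

End TwoIndependentCopies.

Section IndependentFamily.
Context {d} {T : measurableType d} {R : realType} (P : probability T R)
  {m : nat} (S : 'I_m -> T -> R).
Hypothesis S_meas : forall j, measurable_fun setT (S j).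
Hypothesis S_indep : mutually_independent P S.

Lemma preimage_measurable l (A : set R) : measurable A -> measurable (S l @^-1` A).
Proof. by move=> mA; rewrite -[X in measurable X]setTI; exact: S_meas. Qed.

(* A pi-system generating the sigma-algebra of [(S j)_(j in J)]. *)
Definition cylinder (J : pred 'I_m) : set (set T) :=
  [set E | exists B : 'I_m -> set R, [/\ forall j, measurable (B j),
     forall j, ~~ J j -> B j = setT &
     E = \bigcap_(j in [set: 'I_m]) (S j @^-1` B j)]].

Lemma cylinder_measurable J : cylinder J `<=` measurable.
Proof.
move=> _ [B [mB _ ->]]; apply: fin_bigcap_measurable; first exact: finite_finset.
by move=> j _; exact: preimage_measurable.
Qed.

Lemma sigma_cylinder_measurable J : <<s cylinder J >> `<=` measurable.
Proof. exact: smallest_sub (@sigma_algebra_measurable _ T) (@cylinder_measurable _). Qed.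

Lemma cylinderT J : cylinder J setT.
Proof. by exists (fun=> setT); split=> //; apply/seteqP; split=> x. Qed.

Lemma cylinderI J : setI_closed (cylinder J).
Proof.
move=> _ _ [B1 [mB1 h1 ->]] [B2 [mB2 h2 ->]].
exists (fun j => B1 j `&` B2 j); split.
- by move=> j; exact: measurableI.
- by move=> j Jj; rewrite h1 // h2 // setIT.
- apply/seteqP; split=> x /=.
    by move=> [h1x h2x] j _; split; [exact: h1x|exact: h2x].
  by move=> h; split=> j _; have [] := h j I.
Qed.

Lemma preimage_cylinder (J : pred 'I_m) l (A : set R) :
  J l -> measurable A -> cylinder J (S l @^-1` A).
Proof.
move=> Jl mA; exists (fun j => if j == l then A else setT); split.
- by move=> j; case: ifP.
- by move=> j; case: eqP => // ->; rewrite Jl.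
- apply/seteqP; split=> x /=; first by move=> hx j _; case: eqP => // ->.
  by move=> /(_ l I); rewrite eqxx.
Qed.

Lemma independent_cylinder l (A : set R) E : measurable A ->
  cylinder (fun j => j != l) E ->
  P (S l @^-1` A `&` E) = (P (S l @^-1` A) * P E)%E.
Proof.
move=> mA [B [mB hB ->]].
have Bl : B l = setT by apply: hB; rewrite negbK.
pose B' j := if j == l then A else B j.
have mB' j : measurable (B' j) by rewrite /B'; case: ifP.
have -> : S l @^-1` A `&` \bigcap_(j in [set: 'I_m]) S j @^-1` B j =
    \bigcap_(j in [set: 'I_m]) S j @^-1` B' j.
  apply/seteqP; split=> x /=.
    by move=> [hA hB'] j _; rewrite /B'; case: eqP => [->//|_]; exact: hB'.
  move=> h; split; first by have := h l I; rewrite /B' eqxx.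
  by move=> j _; have := h j I; rewrite /B'; case: eqP => [->|//]; rewrite Bl.
rewrite !S_indep // (bigD1 l) //= [X in (_ = _ * X)%E](bigD1 l) //=.
rewrite {1}/B' eqxx Bl preimage_setT probability_setT mul1e.
by congr (_ * _)%E; apply: eq_bigr => j /negbTE jl; rewrite /B' jl.
Qed.

(* Both sides are finite measures in [E] agreeing on the pi-system of
   cylinders, hence on the generated sigma-algebra. *)
Lemma independent_sigma_cylinder l (A : set R) E : measurable A ->
  <<s cylinder (fun j => j != l) >> E ->
  P (S l @^-1` A `&` E) = (P (S l @^-1` A) * P E)%E.
Proof.
move=> mA sE.
have mD : measurable (S l @^-1` A) by exact: preimage_measurable.
have PD_fin : P (S l @^-1` A) \is a fin_num by exact: fin_num_measure.
pose c : {nonneg R} := NngNum (fine_ge0 (measure_ge0 P (S l @^-1` A))).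
have : mrestr P mD E = mscale c P E.
  apply: (@g_sigma_algebra_measure_unique _ R T (cylinder (fun j => j != l))
    (@cylinder_measurable _) (fun=> setT) (fun=> cylinderT _) _ (mrestr P mD)
    (mscale c P) (@cylinderI _) _ _ E sE).
  - by apply/seteqP; split=> // x _; exists 0%N.
  - move=> B GB.
    change (P (B `&` S l @^-1` A) = (fine (P (S l @^-1` A)))%:E * P B)%E.
    by rewrite fineK // setIC independent_cylinder.
  - move=> _; change (P (setT `&` S l @^-1` A) < +oo)%E.
    by rewrite setTI (le_lt_trans (probability_le1 _ mD)) ?ltry.
change (P (E `&` S l @^-1` A) = (fine (P (S l @^-1` A)))%:E * P E ->
  P (S l @^-1` A `&` E) = (P (S l @^-1` A) * P E))%E.
by rewrite fineK // setIC.
Qed.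

Definition count_above (L : seq 'I_m) (s : R) (w : T) : nat :=
  count (fun l => s < S l w) L.

Definition prob_above (s : R) (l : 'I_m) : R := fine (P [set w | s < S l w]).

Lemma above_preimage s l : [set w | s < S l w] = S l @^-1` `]s, +oo[%classic.
Proof. by apply/seteqP; split=> x /=; rewrite in_itv /= andbT. Qed.

Lemma above_measurable s l : measurable [set w | s < S l w].
Proof. by rewrite above_preimage; apply: preimage_measurable; exact: measurable_itv. Qed.

Lemma count_above_sigma (J : pred 'I_m) L s j : all J L ->
  <<s cylinder J >> [set w | count_above L s w = j].
Proof.
move=> JL; apply: (@count_eq_measurable _ (g_sigma_algebraType (cylinder J))).
move=> l lL; apply: sub_sigma_algebra; rewrite above_preimage.
by apply: preimage_cylinder; [exact: (allP JL)|exact: measurable_itv].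
Qed.

Lemma count_above_measurable L s j : measurable [set w | count_above L s w = j].
Proof.
apply: (@sigma_cylinder_measurable predT).
by apply: count_above_sigma; apply/allP.
Qed.

Lemma prob_above_ge0 s l : 0 <= prob_above s l.
Proof. exact: fine_ge0. Qed.

Lemma prob_above_le1 s l : prob_above s l <= 1.
Proof.
rewrite -lee_fin fineK; last exact: fin_num_measure (above_measurable _ _).
exact: probability_le1 (above_measurable _ _).
Qed.

Lemma prob_above_antitone t s l : t <= s -> prob_above s l <= prob_above t l.
Proof.
move=> ts; rewrite -lee_fin !fineK ?fin_num_measure //; try exact: above_measurable.
apply: le_measure; rewrite ?inE; try exact: above_measurable.
by move=> w /=; exact: le_lt_trans.
Qed.

Lemma count_above_law L s j : uniq L ->
  P [set w | count_above L s w = j] =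
  (poisson_binomial [seq prob_above s l | l <- L] j)%:E.
Proof.
elim: L j => [|l L IH] j /=.
  move=> _; case: j => [|j] /=.
    by rewrite (_ : [set w | _] = setT) ?probability_setT //; apply/seteqP.
  by rewrite (_ : [set w | _] = set0) ?measure0 //; apply/seteqP; split=> x.
case/andP=> lL uL.
pose A := [set w | s < S l w].
have mA : measurable A by exact: above_measurable.
have PA : P A = (prob_above s l)%:E by rewrite fineK ?fin_num_measure.
have indep E : <<s cylinder (fun j => j != l) >> E ->
    P (A `&` E) = (P A * P E)%E /\ P (~` A `&` E) = (P (~` A) * P E)%E.
  rewrite /A above_preimage preimage_setC => sE.
  have mI : measurable `]s, +oo[%classic by exact: measurable_itv.
  by split; apply: independent_sigma_cylinder => //; exact: measurableC.
have sigma_rest j' :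
    <<s cylinder (fun j => j != l) >> [set w | count_above L s w = j'].
  by apply: count_above_sigma; apply/allP => x xL; apply: contraNneq lL => <-.
rewrite [X in P X]count_cons_eq_set -/A measureU; first last.
- by apply/seteqP; split=> x // [[Ax _] []].
- by apply: measurableI; [exact: measurableC|exact: count_above_measurable].
- rewrite succn_eq_set; case: j => [|j]; first by rewrite setI0.
  by apply: measurableI; last exact: count_above_measurable.
have H1 : P (A `&` [set w | (count_above L s w).+1 = j]) =
    (prob_above s l * lag (poisson_binomial [seq prob_above s l | l <- L]) j)%:E.
  rewrite succn_eq_set; case: j => [|j]; first by rewrite setI0 measure0 mulr0.
  by rewrite (indep _ (sigma_rest j)).1 PA IH.
have H2 : P (~` A `&` [set w | count_above L s w = j]) =
    ((1 - prob_above s l) * poisson_binomial [seq prob_above s l | l <- L] j)%:E.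
  by rewrite (indep _ (sigma_rest j)).2 probability_setC // PA IH.
by rewrite EFinD addeC; congr (_ + _)%E.
Qed.

Section ConditionOnScore.
Variable i : 'I_m.

Definition others : seq 'I_m := [seq l <- enum 'I_m | l != i].

Lemma all_others : all (fun l => l != i) others.
Proof. by apply/allP => x; rewrite mem_filter => /andP[]. Qed.

Lemma uniq_others : uniq others.
Proof. by rewrite filter_uniq // enum_uniq. Qed.

Lemma rank_count_others t : rank S i t = (count_above others (S i t) t).+1.
Proof.
rewrite /rank /count_above add1n count_filter cardE size_filter enumT.
congr _.+1; apply: eq_count => l /=; rewrite andbC.
by apply/idP/idP => [/set_mem //|]; exact: mem_set.
Qed.

Definition prob_count_others k s : R :=
  fine (P [set w | count_above others s w = k]).

Lemma prob_count_others_ge0 k s : 0 <= prob_count_others k s.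
Proof. exact: fine_ge0. Qed.

Lemma prob_count_othersE k s : prob_count_others k s =
  poisson_binomial [seq prob_above s l | l <- others] k.
Proof. by rewrite /prob_count_others count_above_law ?uniq_others. Qed.

Lemma prob_count_others_tp2 k t s : t <= s ->
  prob_count_others k.+1 s * prob_count_others k t <=
  prob_count_others k s * prob_count_others k.+1 t.
Proof.
move=> ts; rewrite !prob_count_othersE.
have pb_lr : lr_below (poisson_binomial [seq prob_above s l | l <- others])
    (poisson_binomial [seq prob_above t l | l <- others]).
  apply: poisson_binomial_lr_below => l; last exact: prob_above_le1.
  by rewrite prob_above_ge0 prob_above_antitone.
by have := pb_lr k k 1 (leqnn k); rewrite !addn1.
Qed.

(* [T'] is [T] equipped with the sigma-algebra of the scores other than
   [S i]. *)
Let T' := g_sigma_algebraType (cylinder (fun j => j != i)).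

Let id_others (w : T) : T' := w.

Lemma id_others_measurable : measurable_fun setT id_others.
Proof.
move=> _ B mB; rewrite setTI.
exact: (sigma_cylinder_measurable (fun j => j != i)).
Qed.

Let id_others_mfun : {mfun T >-> T'} :=
  HB.pack id_others (isMeasurableFun.Build _ _ _ _ id_others id_others_measurable).

Let score_others (w : T) : (R * T')%type := (S i w, id_others w).

Lemma score_others_measurable : measurable_fun setT score_others.
Proof. exact: measurable_fun_pair (S_meas i) id_others_measurable. Qed.

Let score_others_mfun : {mfun T >-> (R * T')%type} :=
  HB.pack score_others
    (isMeasurableFun.Build _ _ _ _ score_others score_others_measurable).

Let score_mfun : {mfun T >-> R} :=
  HB.pack (S i) (isMeasurableFun.Build _ _ _ _ (S i) (S_meas i)).

Lemma distribution_score_others X : measurable X ->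
  ((distribution P score_mfun \x distribution P id_others_mfun) X =
   distribution P score_others_mfun X)%E.
Proof.
apply: product_measure_unique => A B mA mB.
change (P (score_others @^-1` (A `*` B)) =
  P (S i @^-1` A) * P (id_others @^-1` B))%E.
rewrite (_ : score_others @^-1` (A `*` B) = S i @^-1` A `&` B).
  by rewrite independent_sigma_cylinder.
by apply/seteqP; split.
Qed.

Lemma count_others_measurable k :
  measurable [set x : (R * T')%type | count_above others x.1 x.2 = k].
Proof.
apply: (@count_eq_measurable _ _ _ (fun l (x : (R * T')%type) => x.1 < S l x.2)).
move=> l lO; have li : l != i := allP all_others l lO.
have S_meas' : measurable_fun setT (S l : T' -> R).
  by move=> _ B mB; rewrite setTI; apply: sub_sigma_algebra; apply: preimage_cylinder.
rewrite (_ : [set x | x.1 < S l x.2] =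
   setT `&` (fun x : (R * T')%type => S l x.2 - x.1) @^-1` `]0, +oo[%classic).
  apply: measurable_funB (measurable_itv _) => //.
  exact: measurableT_comp S_meas' measurable_snd.
by apply/seteqP; split=> x /=; rewrite in_itv /= andbT subr_gt0 //; case.
Qed.

Lemma integral_count_others (phi : R -> R) k s : 0 <= phi s ->
  (\int[distribution P id_others_mfun]_y
     ((phi s *
       \1_[set x : (R * T')%type | count_above others x.1 x.2 = k] (s, y))%R)%:E =
   ((phi s * prob_count_others k s)%R)%:E)%E.
Proof.
move=> phi0.
pose Es := [set y : T' | count_above others s y = k].
have mEs : measurable Es by exact: count_above_sigma all_others.
transitivity (\int[distribution P id_others_mfun]_y ((phi s)%:E * (\1_Es y)%:E))%E.
  by apply: eq_integral => y _; rewrite EFinM.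
rewrite ge0_integralZl_EFin //; try (by move=> y _; rewrite lee_fin);
  try (exact/measurable_EFinP/measurable_indic).
rewrite integral_indic // setIT EFinM; congr (_ * _)%E.
change (P Es = (prob_count_others k s)%:E).
by rewrite fineK ?fin_num_measure //; exact: count_above_measurable.
Qed.

Lemma prob_count_others_measurable k : measurable_fun setT (prob_count_others k).
Proof.
pose F (x : (R * T')%type) :=
  (((1 : R) * \1_[set x : (R * T')%type | count_above others x.1 x.2 = k] x)%R)%:E.
have mF : measurable_fun setT F.
  apply/measurable_EFinP; apply: measurable_funM => //.
  exact: measurable_indic (count_others_measurable k).
have F0 x : (0 <= F x)%E by rewrite lee_fin mulr_ge0.
have := @measurable_fun_fubini_tonelli_F _ _ _ _ _
  (distribution P id_others_mfun) F mF F0.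
rewrite (_ : fubini_F _ F = EFin \o prob_count_others k).
  by move/measurable_EFinP.
apply/funext => s /=; rewrite /fubini_F /F.
by rewrite (integral_count_others (fun=> 1)) // mul1r.
Qed.

(* Disintegration: by independence the joint law of [S i] and the other
   scores is a product measure, and Fubini integrates out the others. *)
Lemma integral_score_count_others (phi : R -> R) k :
  measurable_fun setT phi -> (forall x, 0 <= phi x) ->
  (\int[P]_w ((phi (S i w) *
      \1_[set w | count_above others (S i w) w = k] w)%R)%:E =
   \int[P]_w ((phi (S i w) * prob_count_others k (S i w))%R)%:E)%E.
Proof.
move=> mphi phi0.
pose E := [set x : (R * T')%type | count_above others x.1 x.2 = k].
pose F (x : (R * T')%type) := ((phi x.1 * \1_E x)%R)%:E.
have mF : measurable_fun setT F.
  apply/measurable_EFinP; apply: measurable_funM.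
    exact: measurableT_comp mphi measurable_fst.
  exact: measurable_indic (count_others_measurable k).
have F0 x : (0 <= F x)%E by rewrite lee_fin mulr_ge0.
transitivity (\int[P]_(w in score_others @^-1` setT) (F \o score_others) w)%E.
  by rewrite preimage_setT; apply: eq_integral.
rewrite -(ge0_integral_pushforward score_others_measurable) //;
  try by move=> x _; exact: F0.
transitivity (\int[(distribution P score_mfun \x
                   distribution P id_others_mfun)%E]_x F x)%E.
  apply: eq_measure_integral; first exact: score_others_measurable.
  by move=> ? X mX _; symmetry; exact: distribution_score_others.
rewrite (fubini_tonelli1 F mF F0) (ge0_integral_pushforward (S_meas i)) //;
  try exact: measurable_fun_fubini_tonelli_F;
  try (by move=> x _; apply: integral_ge0 => y _; exact: F0).
rewrite preimage_setT; apply: eq_integral => w _ /=.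
by rewrite /fubini_F /F integral_count_others.
Qed.

Lemma rank_eq_set k :
  [set t | rank S i t = k.+1] = [set w | count_above others (S i w) w = k].
Proof. by apply/seteqP; split=> t /=; rewrite rank_count_others; [case|move=> ->]. Qed.

Lemma rank_eq_measurable k : measurable [set t | rank S i t = k.+1].
Proof.
rewrite rank_eq_set; apply: (@count_eq_measurable _ _ _ (fun l w => S i w < S l w)).
move=> l _; rewrite (_ : [set w | S i w < S l w] =
  setT `&` (fun w => S l w - S i w) @^-1` `]0, +oo[%classic).
  by apply: measurable_funB => //; exact: measurable_itv.
by apply/seteqP; split=> x /=; rewrite in_itv /= andbT subr_gt0 //; case.
Qed.

Lemma prob_rank_eq k : P [set t | rank S i t = k.+1] =
  (\int[P]_w (prob_count_others k (S i w))%:E)%E.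
Proof.
rewrite -[X in P X]setIT -integral_indic //; last exact: rank_eq_measurable.
rewrite rank_eq_set; under eq_integral do rewrite -[\1_ _ _]mul1r.
rewrite (integral_score_count_others _ _ (measurable_cst _) (fun=> ler01)).
by under eq_integral do rewrite mul1r.
Qed.

Lemma integral_rank_eq k : (forall w, 0 <= S i w) ->
  (\int[P]_(t in [set t | rank S i t = k.+1]) (S i t)%:E =
   \int[P]_w ((S i w * prob_count_others k (S i w))%R)%:E)%E.
Proof.
move=> S_ge0; rewrite integral_mkcond rank_eq_set.
set E := [set w | _].
transitivity (\int[P]_w ((`|S i w| * \1_E w)%R)%:E)%E.
  apply: eq_integral => w _; rewrite /patch indicE ger0_norm //.
  by case: (w \in E); rewrite ?mulr1 ?mulr0.
rewrite (integral_score_count_others _ _ (@normr_measurable _ _) (@normr_ge0 _ _)).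
by apply: eq_integral => w _; rewrite ger0_norm.
Qed.

End ConditionOnScore.

End IndependentFamily.

Theorem theorem2 (d : measure_display) (T : measurableType d) (R : realType)
  (P : probability T R) (m : nat) (hm : (2 <= m)%N)
  (S : 'I_m -> T -> R)
  (Smeas : forall j, measurable_fun setT (S j))
  (Sindep : mutually_independent P S)
  (Snonneg : forall j t, 0 <= S j t)
  (Sdens : forall j, has_density_on_nonneg P (S j))
  (Sint : forall j, P.-integrable setT (fun t => (S j t)%:E))
  (i : 'I_m) (hi : (i.+1 <= m - 1)%N)
  (k : nat) (hk1 : (1 <= k)%N) (hk2 : (k <= m - 1)%N)
  (hPk : (0 < P [set t | rank S i t = k])%E)
  (hPk1 : (0 < P [set t | rank S i t = k.+1])%E) :
  cond_exp_event P (S i) [set t | rank S i t = k] >=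
  cond_exp_event P (S i) [set t | rank S i t = k.+1].
Proof.
case: k hk1 hk2 hPk hPk1 => [//|k] _ _.
pose g j := prob_count_others P S i j.
have int_fin j : (\int[P]_w ((S i w * g j (S i w))%R)%:E)%E \is a fin_num.
  rewrite -integral_rank_eq //; apply: integrable_fin_num.
    exact: rank_eq_measurable.
  apply: integrableS (Sint i) => //; exact: rank_eq_measurable.
have prob_fin j : (\int[P]_w (g j (S i w))%:E)%E \is a fin_num.
  by rewrite -prob_rank_eq // fin_num_measure //; exact: rank_eq_measurable.
rewrite /cond_exp_event !integral_rank_eq // !prob_rank_eq //.
rewrite -(fineK (prob_fin k)) -(fineK (prob_fin k.+1)) !lte_fin => Pk Pk1.
rewrite ler_pdivrMr // mulrAC ler_pdivlMr // -lee_fin !EFinM.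
rewrite !fineK //; apply: chebyshev_ratio_decreasing => //.
- exact: prob_count_others_measurable.
- exact: prob_count_others_measurable.
- by move=> ?; exact: prob_count_others_ge0.
- by move=> ?; exact: prob_count_others_ge0.
- by move=> t s; exact: prob_count_others_tp2.
Qed.
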